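(* Let $A$ and $B$ be dendroidally ordered sets, let $y$ be a leaf of $A$, and form the grafting $A\circ B$, i.e. the pushout in $\mathbf{bPos}$ of $A\leftarrow\star\rightarrow B$ where $\star\to A$ picks $y$ and $\star\to B$ picks the root of $B$. Then $A\circ B$ is again a dendroidally ordered set, and it is also a pushout of the same diagram in the full subcategory $\Omega\subseteq\mathbf{bPos}$ of dendroidally ordered sets.
   Context: $A^*$ denotes the free monoid (non-commutative setting) or free commutative monoid (commutative setting) on $A$. A broad poset: $R\subseteq A^*\times A$ (written $\le$) with reflexivity, transitivity (if $a_1\cdots a_n\le a$ and $b_i\le a_i$, $b_i\in A^*$, then $b_1\cdots b_n\le a$), antisymmetry on $A$; monotone maps: $b\le a\Rightarrow f(b)\le f(a)$. $\star$ is the singleton broad poset with only the relation $*\le *$; monotone maps $\star\to A$ correspond to elements of $A$. Extended order on $A^*$: $a\le b$ iff $b=b_1\cdots b_n$ ($b_i\in A$), $a=a_1\cdots a_n$ with $a_i\le b_i$. Descendant: $b\le_d a$ iff some $b'\in A^*$ with $b'\le a$ contains $b$. $\hat a=\{b\in A^*:b<a\}$; $a$ is a leaf if $\hat a=\emptyset$; $a$ has children if $\hat a$ has a maximum $a^\uparrow$ (elements of $a^\uparrow$ are children). A dendroidally ordered set is a broad poset with finitely many relations that is simple ($a_1\cdots a_n\le a$ implies the $a_i$ are pairwise distinct), has a root (an element of which every element is a descendant), and in which every non-leaf has children. $\Omega$ is the full subcategory of $\mathbf{bPos}$ on dendroidally ordered sets. Explicitly, assuming $A\cap B=\{y\}$,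 $A\circ B$ is the set $A\cup B$ where $z\le x$ iff it holds in $A$ or in $B$, or $z=a_1ba_2$ with $a_1,a_2\in A^*$, $b\in B^*$, $b\le y$ in $B$ and $a_1ya_2\le x$ in $A$. *)

From Stdlib Require Import List Permutation ClassicalEpsilon.
Import ListNotations.

(* [comm = false]: non-commutative (planar) setting, A^* = free monoid (lists);
   [comm = true]: commutative setting, A^* = free commutative monoid,
   represented by lists taken up to permutation. *)
Definition weq (comm : bool) {T : Type} (u v : list T) : Prop :=
  if comm then Permutation u v else u = v.

Section BPos.
Variable comm : bool.
Variable T : Type.
Variable le : list T -> T -> Prop.

Definition is_bposet : Prop :=
  (* well defined on the free commutative monoid in the commutative setting *)
  (comm = true -> forall w w' a, le w a -> Permutation w w' -> le w' a) /\
  (forall a, le [a] a) /\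
  (forall (w : list T) (a : T) (bs : list (list T)),
      le w a -> Forall2 le bs w -> le (concat bs) a) /\
  (forall a b, le [a] b -> le [b] a -> a = b).

Definition blt (w : list T) (a : T) : Prop := le w a /\ w <> [a].

Definition wle (u v : list T) : Prop :=
  exists ws : list (list T), Forall2 le ws v /\ weq comm u (concat ws).

Definition desc (b a : T) : Prop := exists w, le w a /\ In b w.

Definition is_leaf (a : T) : Prop := forall w, ~ blt w a.

Definition is_root (r : T) : Prop := forall a, desc a r.

Definition has_children (a : T) : Prop :=
  exists m, blt m a /\ forall w, blt w a -> wle w m.

Definition finitely_many_relations : Prop :=
  exists L : list (list T * T), forall w a, le w a -> In (w, a) L.

Definition simple : Prop := forall w a, le w a -> NoDup w.

Definition is_dos : Prop :=
  is_bposet /\ finitely_many_relations /\ simple /\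
  (exists r, is_root r) /\ (forall a, ~ is_leaf a -> has_children a).

End BPos.

Arguments is_bposet comm {T} le.
Arguments blt {T} le w a.
Arguments wle comm {T} le u v.
Arguments desc {T} le b a.
Arguments is_leaf {T} le a.
Arguments is_root {T} le r.
Arguments has_children comm {T} le a.
Arguments finitely_many_relations {T} le.
Arguments simple {T} le.
Arguments is_dos comm {T} le.

Definition monotone {T U : Type} (leT : list T -> T -> Prop)
  (leU : list U -> U -> Prop) (f : T -> U) : Prop :=
  forall w a, leT w a -> leU (map f w) (f a).

(* Grafting A ∘ B: the underlying set is A ∪ B with y ∈ A identified with
   the root rB of B; realised as A + (B \ {rB}). *)
Definition graft_T (A B : Type) (rB : B) : Type :=
  (A + {b : B | b <> rB})%type.

Definition graft_inA {A B : Type} (rB : B) (a : A) : graft_T A B rB := inl a.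

Definition graft_inB {A B : Type} (y : A) (rB : B) (b : B) : graft_T A B rB :=
  match excluded_middle_informative (b = rB) with
  | left _ => inl y
  | right h => inr (exist _ b h)
  end.

Definition graft_le (comm : bool) {A B : Type}
  (leA : list A -> A -> Prop) (leB : list B -> B -> Prop) (y : A) (rB : B)
  (z : list (graft_T A B rB)) (x : graft_T A B rB) : Prop :=
  (exists w a, leA w a /\ weq comm z (map (graft_inA rB) w) /\ x = graft_inA rB a)
  \/ (exists w b, leB w b /\ weq comm z (map (graft_inB y rB) w)
                  /\ x = graft_inB y rB b)
  \/ (exists a1 a2 bw a, leB bw rB /\ leA (a1 ++ y :: a2) a /\
        weq comm z (map (graft_inA rB) a1 ++ map (graft_inB y rB) bw
                     ++ map (graft_inA rB) a2)
        /\ x = graft_inA rB a).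

(* The relation of A ∘ B is defined by three clauses (relations of A, of B,
   and "mixed" relations a1 b a2 ≤ x with b ≤ rB in B and a1 y a2 ≤ x in A).
   Transitivity is awkward to check on that presentation, so we first prove
   it equivalent to a normal form [nf]:
     - z ≤ iB b  iff  z is the image of some v ≤ b in B;
     - z ≤ a     iff  z is obtained from some a1 ... an ≤ a in A by replacing
                      every ai by a "piece" over ai: either ai itself, or,
                      when ai = y, the image of some relation bw ≤ rB of B.
   Since A is simple, y occurs at most once in a1 ... an, which is why the
   normal form collapses back to the three clauses.  The normal form is
   stable under substitution (since y is a leaf of A, a relation below the
   grafting point only involves B), giving transitivity; reflexivity,
   antisymmetry, simplicity, finiteness, the root and the children of A ∘ B
   are read off from the corresponding data of A and B.  The universal
   property holds because every element of A ∘ B lies in the image of A or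
   of B, so the copairing of f and g is the only candidate and is monotone. *)

From Stdlib Require Import List Permutation ClassicalEpsilon ProofIrrelevance
  Classical FinFun.
Import ListNotations.

Lemma weq_refl c {T} (l : list T) : weq c l l.
Proof. destruct c; simpl; auto. Qed.

Lemma weq_sym c {T} (l l' : list T) : weq c l l' -> weq c l' l.
Proof. destruct c; simpl; intros; subst; auto using Permutation_sym. Qed.

Lemma weq_trans c {T} (l l' l'' : list T) :
  weq c l l' -> weq c l' l'' -> weq c l l''.
Proof. destruct c; simpl; intros; subst; eauto using Permutation_trans. Qed.

Lemma weq_map c {T U} (f : T -> U) l l' :
  weq c l l' -> weq c (map f l) (map f l').
Proof. destruct c; simpl; intros; subst; auto using Permutation_map. Qed.

Lemma weq_app c {T} (l1 l2 l1' l2' : list T) :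
  weq c l1 l1' -> weq c l2 l2' -> weq c (l1 ++ l2) (l1' ++ l2').
Proof. destruct c; simpl; intros; subst; auto using Permutation_app. Qed.

Lemma weq_concat c {T} (l l' : list (list T)) :
  weq c l l' -> weq c (concat l) (concat l').
Proof.
  destruct c; simpl; intros H; subst; auto.
  induction H; simpl; auto.
  - apply Permutation_app_head; auto.
  - rewrite !app_assoc. apply Permutation_app_tail, Permutation_app_comm.
  - eauto using Permutation_trans.
Qed.

Lemma weq_In c {T} (l l' : list T) x : weq c l l' -> In x l -> In x l'.
Proof. destruct c; simpl; intros; subst; eauto using Permutation_in. Qed.

Lemma weq_NoDup c {T} (l l' : list T) : weq c l l' -> NoDup l -> NoDup l'.
Proof. destruct c; simpl; intros; subst; eauto using Permutation_NoDup. Qed.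

Lemma weq_single c {T} (x : T) l : weq c [x] l -> l = [x].
Proof. destruct c; simpl; intros; subst; auto using Permutation_length_1_inv. Qed.

Lemma weq_single' c {T} (x : T) l : weq c l [x] -> l = [x].
Proof. intros; apply (weq_single c); apply weq_sym; auto. Qed.

Lemma Forall2_weq_r c {X Y} (R : X -> Y -> Prop) xs l l' :
  Forall2 R xs l -> weq c l l' -> exists xs', weq c xs xs' /\ Forall2 R xs' l'.
Proof.
  destruct c; simpl; intros HF HP; subst; eauto.
  apply Forall2_flip in HF.
  destruct (Permutation_Forall2 HP HF) as [xs' [P F]].
  exists xs'; split; auto. apply Forall2_flip; auto.
Qed.

Lemma Forall2_concat_split {X Y} (R : X -> Y -> Prop) bs (ps : list (list Y)) :
  Forall2 R bs (concat ps) ->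
  exists css, bs = concat css /\ Forall2 (Forall2 R) css ps.
Proof.
  revert bs; induction ps as [|p ps IH]; simpl; intros bs H.
  - inversion H; subst. exists []; auto.
  - apply Forall2_app_inv_r in H as [l1 [l2 [H1 [H2 ->]]]].
    destruct (IH _ H2) as [css [-> F]]. exists (l1 :: css); simpl; auto.
Qed.

Lemma Forall2_map_l {X Y Z} (R : Z -> Y -> Prop) (f : X -> Z) xs ys :
  Forall2 (fun x y => R (f x) y) xs ys -> Forall2 R (map f xs) ys.
Proof. induction 1; simpl; auto. Qed.

Lemma Forall2_map_r {X Y Z} (R : X -> Z -> Prop) (f : Y -> Z) xs ys :
  Forall2 (fun x y => R x (f y)) xs ys -> Forall2 R xs (map f ys).
Proof. induction 1; simpl; auto. Qed.

Lemma Forall2_map_r_inv {X Y Z} (R : X -> Z -> Prop) (f : Y -> Z) xs ys :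
  Forall2 R xs (map f ys) -> Forall2 (fun x y => R x (f y)) xs ys.
Proof. revert xs; induction ys; simpl; intros xs H; inversion H; subst; auto. Qed.

Lemma Forall2_diag {X} (R : X -> X -> Prop) xs :
  (forall x, R x x) -> Forall2 R xs xs.
Proof. induction xs; simpl; auto. Qed.

Lemma concat_singletons {X} (l : list X) : concat (map (fun x => [x]) l) = l.
Proof. induction l; simpl; f_equal; auto. Qed.

Lemma concat_concat {X} (l : list (list (list X))) :
  concat (concat l) = concat (map (@concat X) l).
Proof. induction l; simpl; auto. rewrite concat_app; f_equal; auto. Qed.

Lemma map_single {X Y} (f : X -> Y) l z :
  map f l = [z] -> exists x, l = [x] /\ f x = z.
Proof. destruct l as [|x [|]]; simpl; intros H; inversion H; eauto. Qed.

Lemma NoDup_app_disjoint {X} (l1 l2 : list X) x :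
  NoDup (l1 ++ l2) -> In x l1 -> In x l2 -> False.
Proof.
  induction l1 as [|u l1 IH]; simpl; intros H I1 I2; [auto|].
  inversion H as [|? ? Hn Hd]; subst. destruct I1 as [->|I1]; eauto.
  apply Hn; apply in_or_app; auto.
Qed.

Fixpoint choices {X} (os : list (list X)) : list (list X) :=
  match os with
  | [] => [[]]
  | o :: os => flat_map (fun p => map (cons p) (choices os)) o
  end.

Lemma choices_complete {X} (ps : list X) os :
  Forall2 (fun p o => In p o) ps os -> In ps (choices os).
Proof.
  induction 1; simpl; auto.
  apply in_flat_map. exists x; split; auto. apply in_map; auto.
Qed.

Fixpoint insertions {X} (x : X) (l : list X) : list (list X) :=
  match l with
  | [] => [[x]]
  | h :: t => (x :: h :: t) :: map (cons h) (insertions x t)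
  end.

Lemma insertions_complete {X} (x : X) l1 l2 :
  In (l1 ++ x :: l2) (insertions x (l1 ++ l2)).
Proof.
  induction l1; simpl.
  - destruct l2; simpl; auto.
  - right. apply in_map; auto.
Qed.

Fixpoint perms {X} (l : list X) : list (list X) :=
  match l with
  | [] => [[]]
  | x :: t => flat_map (insertions x) (perms t)
  end.

Lemma perms_complete {X} (l l' : list X) : Permutation l l' -> In l' (perms l).
Proof.
  revert l'; induction l as [|x t IH]; simpl; intros l' P.
  - apply Permutation_nil in P; subst; auto.
  - destruct (Permutation_vs_cons_inv (Permutation_sym P)) as [l1 [l2 ->]].
    apply Permutation_cons_app_inv in P. apply in_flat_map.
    exists (l1 ++ l2); split; auto. apply insertions_complete.
Qed.

Definition weq_class {X} (c : bool) (l : list X) : list (list X) :=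
  if c then perms l else [l].

Lemma weq_class_complete {X} c (z l : list X) : weq c z l -> In z (weq_class c l).
Proof.
  destruct c; simpl; intros; subst; auto.
  apply perms_complete, Permutation_sym; auto.
Qed.

Lemma bposet_weq c {T} (le : list T -> T -> Prop) w w' a :
  is_bposet c le -> le w a -> weq c w w' -> le w' a.
Proof. intros [P _] H E. destruct c; simpl in E; subst; eauto. Qed.

Lemma bposet_subst c {T} (le : list T -> T -> Prop) w1 w2 x a v :
  is_bposet c le -> le (w1 ++ x :: w2) a -> le v x -> le (w1 ++ v ++ w2) a.
Proof.
  intros (_ & Hrefl & Htrans & _) H Hv.
  replace (w1 ++ v ++ w2) with
    (concat (map (fun x => [x]) w1 ++ [v] ++ map (fun x => [x]) w2)).
  - apply (Htrans _ _ _ H). apply Forall2_app.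
    + apply Forall2_map_l, Forall2_diag; auto.
    + constructor; auto. apply Forall2_map_l, Forall2_diag; auto.
  - rewrite !concat_app, !concat_singletons. simpl. rewrite app_nil_r. auto.
Qed.

(* In a simple broad poset an element occurs below itself only trivially:
   v ≤ x with x ∈ v forces v = [x] (otherwise substituting v for x in
   v ≤ x produces a word with a repetition). *)
Lemma simple_self_below c {T} (le : list T -> T -> Prop) v x :
  is_bposet c le -> simple le -> le v x -> In x v -> v = [x].
Proof.
  intros BP S H Hin. apply in_split in Hin as [v1 [v2 ->]].
  pose proof (S _ _ (bposet_subst c le v1 v2 x x _ BP H H)) as ND.
  destruct v1 as [|u v1].
  - destruct v2 as [|u v2]; auto. exfalso.
    apply (NoDup_app_disjoint (x :: u :: v2) (u :: v2) u); simpl; auto.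
  - exfalso.
    apply (NoDup_app_disjoint (u :: v1) ((u :: v1 ++ x :: v2) ++ v2) u);
      simpl; auto.
Qed.

Lemma simple_desc_antisym c {T} (le : list T -> T -> Prop) a a' :
  is_bposet c le -> simple le -> desc le a a' -> desc le a' a -> a = a'.
Proof.
  intros BP S [wa [H1 I1]] [wa' [H2 I2]].
  pose proof BP as (_ & _ & _ & Hanti).
  apply in_split in I1 as [w1 [w2 ->]].
  pose proof (bposet_subst c le w1 w2 a a' wa' BP H1 H2) as H3.
  assert (I3 : In a' (w1 ++ wa' ++ w2))
    by (apply in_or_app; right; apply in_or_app; auto).
  pose proof (simple_self_below c le _ _ BP S H3 I3) as E.
  destruct w1 as [|u w1]; simpl in E.
  - destruct wa' as [|u wa']; [destruct I2|]. simpl in E. inversion E; subst.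
    apply app_eq_nil in H4 as [-> ->]. apply Hanti; auto.
  - inversion E; subst.
    apply app_eq_nil in H4 as [_ [E2 _]%app_eq_nil]. subst; destruct I2.
Qed.

Lemma leaf_below {T} (le : list T -> T -> Prop) w a :
  is_leaf le a -> le w a -> w = [a].
Proof.
  intros L H. destruct (classic (w = [a])); auto.
  exfalso; apply (L w); split; auto.
Qed.

Section Grafting.
Variable comm : bool.
Variables A B : Type.
Variable leA : list A -> A -> Prop.
Variable leB : list B -> B -> Prop.
Variable y : A.
Variable rB : B.
Hypothesis HA : is_dos comm leA.
Hypothesis HB : is_dos comm leB.
Hypothesis Hy : is_leaf leA y.
Hypothesis Hr : is_root leB rB.

Let T := graft_T A B rB.
Let iA : A -> T := graft_inA rB.
Let iB : B -> T := graft_inB y rB.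
Let le := graft_le comm leA leB y rB.

Let bpA : is_bposet comm leA := proj1 HA.
Let bpB : is_bposet comm leB := proj1 HB.

Lemma A_refl a : leA [a] a. Proof. apply bpA. Qed.
Lemma B_refl b : leB [b] b. Proof. apply bpB. Qed.
Lemma A_trans w a bs : leA w a -> Forall2 leA bs w -> leA (concat bs) a.
Proof. apply bpA. Qed.
Lemma B_trans w b bs : leB w b -> Forall2 leB bs w -> leB (concat bs) b.
Proof. apply bpB. Qed.
Lemma A_simple : simple leA. Proof. apply HA. Qed.
Lemma B_simple : simple leB. Proof. apply HB. Qed.

Lemma iB_root : iB rB = iA y.
Proof.
  unfold iA, iB, graft_inA, graft_inB.
  destruct (excluded_middle_informative (rB = rB)); congruence.
Qed.

Lemma iB_nonroot (b : {b : B | b <> rB}) : iB (proj1_sig b) = inr b.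
Proof.
  unfold iB, graft_inB. destruct b as [b h]; simpl.
  destruct (excluded_middle_informative (b = rB)); [congruence|].
  do 2 f_equal. apply proof_irrelevance.
Qed.

Lemma iB_eq_iA b a : iB b = iA a -> b = rB /\ a = y.
Proof.
  unfold iA, iB, graft_inA, graft_inB.
  destruct (excluded_middle_informative (b = rB)); intros H; inversion H; auto.
Qed.

Lemma iB_inj b b' : iB b = iB b' -> b = b'.
Proof.
  unfold iB, graft_inB.
  destruct (excluded_middle_informative (b = rB)),
           (excluded_middle_informative (b' = rB));
    intros H; inversion H; congruence.
Qed.

Lemma graft_cases (x : T) :
  (exists b, x = iB b) \/ (exists a, x = iA a /\ a <> y).
Proof.
  destruct x as [a|b].
  - destruct (classic (a = y)) as [->|]; [|right; eauto].
    left; exists rB; rewrite iB_root; auto.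
  - left; exists (proj1_sig b); rewrite iB_nonroot; auto.
Qed.

Definition collapse (x : T) : A := match x with inl a => a | inr _ => y end.

Lemma collapse_iB b : collapse (iB b) = y.
Proof. unfold iB, graft_inB. destruct (excluded_middle_informative (b = rB)); auto. Qed.

Definition piece (p : list T) (a : A) : Prop :=
  p = [iA a] \/ (a = y /\ exists bw, leB bw rB /\ p = map iB bw).

Definition nf (z : list T) (x : T) : Prop :=
  (exists a wa ps, x = iA a /\ leA wa a /\ Forall2 piece ps wa /\
                   weq comm z (concat ps)) \/
  (exists b w, x = iB b /\ leB w b /\ weq comm z (map iB w)).

Lemma trivial_pieces wa : Forall2 piece (map (fun a => [iA a]) wa) wa.
Proof. apply Forall2_map_l, Forall2_diag. intros; left; auto. Qed.

Lemma concat_trivial_pieces wa :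
  concat (map (fun a => [iA a]) wa) = map iA wa.
Proof. induction wa; simpl; f_equal; auto. Qed.

Lemma collapse_piece p a x : piece p a -> In x p -> collapse x = a.
Proof.
  intros [->|[-> (bw & _ & ->)]] H.
  - destruct H as [<-|[]]; auto.
  - apply in_map_iff in H as [b [<- _]]; apply collapse_iB.
Qed.

Lemma collapse_pieces ps wa x :
  Forall2 piece ps wa -> In x (concat ps) -> In (collapse x) wa.
Proof.
  induction 1; simpl; [intros []|]. intros [I|I]%in_app_or.
  - left; symmetry; eapply collapse_piece; eauto.
  - right; auto.
Qed.

Lemma graft_le_nf z x : le z x -> nf z x.
Proof.
  intros [(w & a & H1 & H2 & ->)|[(w & b & H1 & H2 & ->)|
          (a1 & a2 & bw & a & H1 & H2 & H3 & ->)]].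
  - left. exists a, w, (map (fun a => [iA a]) w).
    rewrite concat_trivial_pieces. auto using trivial_pieces.
  - right. eauto.
  - left. exists a, (a1 ++ y :: a2),
      (map (fun a => [iA a]) a1 ++ [map iB bw] ++ map (fun a => [iA a]) a2).
    repeat split; auto.
    + apply Forall2_app; [apply trivial_pieces|].
      constructor; [right; eauto|apply trivial_pieces].
    + rewrite !concat_app, !concat_trivial_pieces. simpl.
      rewrite app_nil_r. auto.
Qed.

(* Over a duplicate-free word of A at most one piece is non-trivial, so the
   concatenated pieces have the shape of a clause of [graft_le]. *)
Lemma pieces_shape ps wa : Forall2 piece ps wa -> NoDup wa ->
  concat ps = map iA wa \/
  exists a1 a2 bw, wa = a1 ++ y :: a2 /\ leB bw rB /\
     concat ps = map iA a1 ++ map iB bw ++ map iA a2.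
Proof.
  induction 1 as [|p a ps wa HS HF IH]; intros ND; simpl; auto.
  inversion ND as [|? ? Hn ND']; subst.
  destruct (IH ND') as [E|(a1 & a2 & bw & E1 & E2 & E3)];
    destruct HS as [->|[-> (bw' & Hb & ->)]].
  - left. simpl. rewrite E; auto.
  - right. exists [], wa, bw'. simpl; rewrite E; auto.
  - right. exists (a :: a1), a2, bw. subst; simpl. rewrite E3; auto.
  - exfalso; apply Hn; subst; apply in_or_app; simpl; auto.
Qed.

Lemma nf_graft_le z x : nf z x -> le z x.
Proof.
  intros [(a & wa & ps & -> & H1 & H2 & H3)|(b & w & -> & H1 & H2)].
  - destruct (pieces_shape ps wa H2 (A_simple _ _ H1))
      as [E|(a1 & a2 & bw & E1 & E2 & E3)].
    + rewrite E in H3. left. exists wa, a. auto.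
    + rewrite E3 in H3. right; right. exists a1, a2, bw, a. subst; auto.
  - right; left. exists w, b; auto.
Qed.

(* Below an element of B only relations of B: y being a leaf of A, the only
   relation of A below y is the trivial one. *)
Lemma nf_below_iB z b : nf z (iB b) -> exists v, leB v b /\ weq comm z (map iB v).
Proof.
  intros [(a & wa & ps & E & H1 & H2 & H3)|(b' & w & E & H1 & H2)].
  - apply iB_eq_iA in E as [-> ->].
    apply (leaf_below _ _ _ Hy) in H1; subst.
    inversion H2 as [|p ? ? ? HS HF]; subst. inversion HF; subst.
    simpl in H3. rewrite app_nil_r in H3.
    destruct HS as [->|[_ (bw & Hb & ->)]]; eauto.
    exists [rB]; split; [apply B_refl|]. simpl; rewrite iB_root; auto.
  - apply iB_inj in E; subst; eauto.
Qed.

Lemma nf_below_iA z a :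
  nf z (iA a) -> exists wa ps, leA wa a /\ Forall2 piece ps wa /\ weq comm z (concat ps).
Proof.
  intros [(a' & wa & ps & E & H1 & H2 & H3)|(b' & w & E & H1 & H2)].
  - inversion E; subst; eauto.
  - symmetry in E. apply iB_eq_iA in E as [-> ->].
    exists [y], [map iB w]. split; [apply A_refl|]. split.
    + constructor; [right; eauto|constructor].
    + simpl; rewrite app_nil_r; auto.
Qed.

Lemma nf_into_B_relation cs bw : Forall2 (fun c b => nf c (iB b)) cs bw ->
  exists vs, Forall2 leB vs bw /\ weq comm (concat cs) (map iB (concat vs)).
Proof.
  induction 1 as [|c b cs bw H HF IH]; simpl.
  - exists []; split; auto. apply weq_refl.
  - destruct IH as [vs [F E]]. apply nf_below_iB in H as [v [Hv Ev]].
    exists (v :: vs); split; auto. simpl. rewrite map_app. apply weq_app; auto.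
Qed.

Lemma nf_into_piece cs p a : Forall2 nf cs p -> piece p a ->
  exists wa ps, leA wa a /\ Forall2 piece ps wa /\ weq comm (concat cs) (concat ps).
Proof.
  intros F [->|[-> (bw & Hb & ->)]].
  - inversion F as [|c ? ? ? Hc Hn]; subst. inversion Hn; subst.
    simpl. rewrite app_nil_r. apply nf_below_iA; auto.
  - apply Forall2_map_r_inv in F.
    destruct (nf_into_B_relation _ _ F) as [vs [F2 E]].
    exists [y], [map iB (concat vs)]. split; [apply A_refl|]. split.
    + constructor; [|constructor]. right; split; auto.
      exists (concat vs); split; eauto using B_trans.
    + simpl; rewrite app_nil_r; auto.
Qed.

Lemma nf_into_pieces css ps wa : Forall2 (Forall2 nf) css ps -> Forall2 piece ps wa ->
  exists was pss, Forall2 leA was wa /\ Forall2 piece (concat pss) (concat was) /\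
     weq comm (concat (concat css)) (concat (concat pss)).
Proof.
  intros F1 F2. revert css F1.
  induction F2 as [|p a ps wa HS HF IH]; intros css F1;
    inversion F1 as [|cs ? css' ? Hc Hcs]; subst.
  - exists [], []; simpl; repeat split; auto. apply weq_refl.
  - destruct (IH _ Hcs) as (was & pss & G1 & G2 & G3).
    destruct (nf_into_piece _ _ _ Hc HS) as (wa' & ps' & K1 & K2 & K3).
    exists (wa' :: was), (ps' :: pss). simpl. repeat split; auto.
    + apply Forall2_app; auto.
    + rewrite !concat_app. apply weq_app; auto.
Qed.

Lemma nf_trans w x bs : nf w x -> Forall2 nf bs w -> nf (concat bs) x.
Proof.
  intros [(a & wa & ps & -> & H1 & H2 & H3)|(b & v & -> & H1 & H2)] F.
  - destruct (Forall2_weq_r comm _ _ _ _ F H3) as [bs' [E F']].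
    destruct (Forall2_concat_split _ _ _ F') as [css [-> F'']].
    destruct (nf_into_pieces _ _ _ F'' H2) as (was & pss & G1 & G2 & G3).
    left. exists a, (concat was), (concat pss). repeat split; eauto using A_trans.
    eapply weq_trans; [apply weq_concat; eauto|auto].
  - destruct (Forall2_weq_r comm _ _ _ _ F H2) as [bs' [E F']].
    apply Forall2_map_r_inv in F'.
    destruct (nf_into_B_relation _ _ F') as [vs [G1 G2]].
    right. exists b, (concat vs). repeat split; eauto using B_trans.
    eapply weq_trans; [apply weq_concat; eauto|auto].
Qed.

Lemma graft_trans w x bs : le w x -> Forall2 le bs w -> le (concat bs) x.
Proof.
  intros H F. apply nf_graft_le, (nf_trans w); auto using graft_le_nf.
  eapply Forall2_impl; [|eauto]. intros; apply graft_le_nf; auto.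
Qed.

Lemma graft_refl x : le [x] x.
Proof.
  apply nf_graft_le. destruct (graft_cases x) as [[b ->]|[a [-> _]]].
  - right. exists b, [b]. auto using B_refl, weq_refl.
  - left. exists a, [a], [[iA a]]. repeat split; auto using A_refl, weq_refl.
    constructor; [left; auto|constructor].
Qed.

Lemma graft_comm_closed :
  comm = true -> forall w w' x, le w x -> Permutation w w' -> le w' x.
Proof.
  intros Hc w w' x H P.
  assert (K : forall z, weq comm w z -> weq comm w' z).
  { intros z E. eapply weq_trans; [|eauto]. rewrite Hc. apply Permutation_sym, P. }
  destruct H as [(u & a & H1 & H2 & H3)|[(u & b & H1 & H2 & H3)|
                 (a1 & a2 & bw & a & H1 & H2 & H3 & H4)]].
  - left; exists u, a; auto.
  - right; left; exists u, b; auto.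
  - right; right; exists a1, a2, bw, a; auto.
Qed.

Lemma graft_unary_below_iB x b : le [x] (iB b) -> exists b', x = iB b' /\ leB [b'] b.
Proof.
  intros H. apply graft_le_nf, nf_below_iB in H as [v [Hv E]].
  apply weq_single in E. apply map_single in E as [b' [-> E]]. eauto.
Qed.

Lemma graft_unary_below_iA x a : le [x] (iA a) -> desc leA (collapse x) a.
Proof.
  intros H. apply graft_le_nf, nf_below_iA in H as (wa & ps & H1 & H2 & H3).
  exists wa; split; auto. eapply collapse_pieces; eauto.
  eapply weq_In; [eauto|left; auto].
Qed.

(* Antisymmetry: within B it is that of B, across A and B it is impossible
   (a unary relation below iB b stays in B), and within A \ {y} it is the
   antisymmetry of the descendant order of the simple broad poset A. *)
Lemma graft_antisym x x' : le [x] x' -> le [x'] x -> x = x'.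
Proof.
  intros H1 H2.
  destruct (graft_cases x) as [[b ->]|[a [-> Ha]]],
           (graft_cases x') as [[b' ->]|[a' [-> Ha']]].
  - apply graft_unary_below_iB in H1 as [b0 [E1 L1]].
    apply graft_unary_below_iB in H2 as [b0' [E2 L2]].
    apply iB_inj in E1, E2; subst. f_equal. apply bpB; auto.
  - apply graft_unary_below_iB in H2 as [b0 [E _]].
    symmetry in E. apply iB_eq_iA in E as [_ E]. contradiction.
  - apply graft_unary_below_iB in H1 as [b0 [E _]].
    symmetry in E. apply iB_eq_iA in E as [_ E]. contradiction.
  - apply graft_unary_below_iA in H1, H2. simpl in H1, H2. f_equal.
    apply (simple_desc_antisym comm leA); auto using A_simple.
Qed.

Lemma graft_bposet : is_bposet comm le.
Proof.
  split; [apply graft_comm_closed|split; [apply graft_refl|split]].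
  - apply graft_trans.
  - apply graft_antisym.
Qed.

(* Simplicity: pieces over distinct entries of a simple word of A are
   disjoint (their collapses differ), and each piece is duplicate-free. *)
Lemma pieces_NoDup ps wa : Forall2 piece ps wa -> NoDup wa -> NoDup (concat ps).
Proof.
  induction 1 as [|p a ps wa HS HF IH]; simpl; intros ND; [constructor|].
  inversion ND as [|? ? Hn ND']; subst. apply NoDup_app; auto.
  - destruct HS as [->|[-> (bw & Hb & ->)]]; [repeat constructor; auto|].
    apply Injective_map_NoDup; [exact iB_inj|]. eapply B_simple; eauto.
  - intros u I1 I2. apply Hn.
    rewrite <- (collapse_piece _ _ _ HS I1). eapply collapse_pieces; eauto.
Qed.

Lemma graft_simple : simple le.
Proof.
  intros z x H.
  apply graft_le_nf in H as [(a & wa & ps & -> & H1 & H2 & H3)|(b & w & -> & H1 & H2)];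
    eapply weq_NoDup; try (apply weq_sym; eassumption).
  - eapply pieces_NoDup; eauto using A_simple.
  - apply Injective_map_NoDup; [exact iB_inj|]. eapply B_simple; eauto.
Qed.

(* Finiteness: every relation of A ∘ B is, up to [weq], a choice of pieces
   over a relation of A (the non-trivial pieces being images of the finitely
   many relations of B), or the image of a relation of B. *)
Lemma graft_finite : finitely_many_relations le.
Proof.
  pose proof HA as (_ & [LA HLA] & _). pose proof HB as (_ & [LB HLB] & _).
  set (pieces_over := fun a : A =>
         [iA a] :: map (fun e : list B * B => map iB (fst e)) LB).
  exists (flat_map (fun e : list A * A =>
            flat_map (fun ps => map (fun z => (z, iA (snd e)))
                                    (weq_class comm (concat ps)))
                     (choices (map pieces_over (fst e)))) LA ++
          flat_map (fun e : list B * B =>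
            map (fun z => (z, iB (snd e))) (weq_class comm (map iB (fst e)))) LB).
  intros z x H. apply graft_le_nf in H as
    [(a & wa & ps & -> & H1 & H2 & H3)|(b & w & -> & H1 & H2)];
    apply in_or_app; [left|right]; apply in_flat_map.
  - exists (wa, a); split; auto. apply in_flat_map. exists ps; split.
    + apply choices_complete, Forall2_map_r.
      eapply Forall2_impl; [|eauto].
      intros p a' [->|[-> (bw & Hb & ->)]]; simpl; auto.
      right. apply in_map_iff. exists (bw, rB); auto.
    + apply in_map_iff. exists z; split; auto. apply weq_class_complete; auto.
  - exists (w, b); split; auto. apply in_map_iff.
    exists z; split; auto. apply weq_class_complete; auto.
Qed.

(* The root of A is the root of A ∘ B: elements of B descend from rB, which is
   identified with y, a descendant of rA. *)
Lemma graft_root : exists r, is_root le r.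
Proof.
  pose proof HA as (_ & _ & _ & [rA HrA] & _). exists (iA rA). intros x.
  destruct (graft_cases x) as [[b ->]|[a [-> _]]].
  - destruct (Hr b) as [bw [Hb Ib]]. destruct (HrA y) as [wa [Hw Iw]].
    apply in_split in Iw as [a1 [a2 ->]].
    exists (map iA a1 ++ map iB bw ++ map iA a2). split.
    + right; right. exists a1, a2, bw, rA. repeat split; auto using weq_refl.
    + apply in_or_app; right; apply in_or_app; left; apply in_map; auto.
  - destruct (HrA a) as [wa [Hw Iw]]. exists (map iA wa). split.
    + left. exists wa, rA; repeat split; auto using weq_refl.
    + apply in_map; auto.
Qed.

Lemma graft_children_iB b : ~ is_leaf le (iB b) -> has_children comm le (iB b).
Proof.
  intros NL.
  assert (NLB : ~ is_leaf leB b).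
  { intros LB. apply NL. intros w [H1 H2].
    apply graft_le_nf, nf_below_iB in H1 as [v [Hv E]].
    apply (leaf_below _ _ _ LB) in Hv; subst. apply weq_single' in E. auto. }
  pose proof HB as (_ & _ & _ & _ & CH).
  destruct (CH b NLB) as [mB [[M1 M2] M3]].
  exists (map iB mB). split; [split|].
  - apply nf_graft_le; right; exists b, mB; auto using weq_refl.
  - intros E. apply map_single in E as [b0 [-> E]]. apply iB_inj in E; subst; auto.
  - intros w [H1 H2]. apply graft_le_nf, nf_below_iB in H1 as [v [Hv E]].
    assert (Nv : v <> [b]) by (intros ->; apply H2; apply weq_single' in E; auto).
    destruct (M3 v (conj Hv Nv)) as [vs [F Ev]].
    exists (map (map iB) vs). split.
    + apply Forall2_map_l, Forall2_map_r. eapply Forall2_impl; [|eauto].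
      intros v' b' H. apply nf_graft_le; right; exists b', v'; auto using weq_refl.
    + eapply weq_trans; [eauto|]. rewrite <- concat_map. apply weq_map; auto.
Qed.

Lemma grouped_pieces_below pss vs mA :
  Forall2 (Forall2 piece) pss vs -> Forall2 leA vs mA ->
  Forall2 le (map (@concat T) pss) (map iA mA).
Proof.
  intros F1; revert mA.
  induction F1; intros mA F2; inversion F2; subst; simpl; constructor; auto.
  apply nf_graft_le. left. exists y1, y0, x. auto using weq_refl.
Qed.

Lemma pieces_over_self a ps w :
  a <> y -> Forall2 piece ps [a] -> weq comm w (concat ps) -> w = [iA a].
Proof.
  intros Ha F E. inversion F as [|p ? ? ? HS HF]; subst. inversion HF; subst.
  simpl in E. rewrite app_nil_r in E.
  destruct HS as [->|[? _]]; [|contradiction]. apply weq_single' in E; auto.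
Qed.

(* Children of a ∈ A \ {y}: the pieces of the children of a in A, each
   maximal relation of A ∘ B below a being substituted into them. *)
Lemma graft_children_iA a : a <> y -> ~ is_leaf le (iA a) -> has_children comm le (iA a).
Proof.
  intros Ha NL.
  assert (NLA : ~ is_leaf leA a).
  { intros LA. apply NL. intros w [H1 H2].
    apply graft_le_nf, nf_below_iA in H1 as (wa & ps & Hw & F & E).
    apply (leaf_below _ _ _ LA) in Hw; subst.
    apply H2. eapply pieces_over_self; eauto. }
  pose proof HA as (_ & _ & _ & _ & CH).
  destruct (CH a NLA) as [mA [[M1 M2] M3]].
  exists (map iA mA). split; [split|].
  - apply nf_graft_le; left; exists a, mA, (map (fun a => [iA a]) mA).
    rewrite concat_trivial_pieces. auto using trivial_pieces, weq_refl.
  - intros E. apply map_single in E as [a0 [-> E]]. inversion E; subst; auto.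
  - intros w [H1 H2]. apply graft_le_nf, nf_below_iA in H1 as (wa & ps & Hw & F & E).
    assert (Nw : wa <> [a])
      by (intros ->; apply H2; eapply pieces_over_self; eauto).
    destruct (M3 wa (conj Hw Nw)) as [vs [Fv Ev]].
    destruct (Forall2_weq_r comm _ _ _ _ F Ev) as [ps' [Ep F']].
    destruct (Forall2_concat_split _ _ _ F') as [pss [-> F'']].
    exists (map (@concat T) pss). split.
    + eapply grouped_pieces_below; eauto.
    + eapply weq_trans; [eauto|]. rewrite <- concat_concat. apply weq_concat; auto.
Qed.

Lemma graft_dos : is_dos comm le.
Proof.
  split; [apply graft_bposet|split; [apply graft_finite|]].
  split; [apply graft_simple|split; [apply graft_root|]].
  intros x NL. destruct (graft_cases x) as [[b ->]|[a [-> Ha]]].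
  - apply graft_children_iB; auto.
  - apply graft_children_iA; auto.
Qed.

Lemma iA_monotone : monotone leA le iA.
Proof. intros w a H. left. exists w, a. auto using weq_refl. Qed.

Lemma iB_monotone : monotone leB le iB.
Proof. intros w b H. right; left. exists w, b. auto using weq_refl. Qed.

Definition copair {C : Type} (f : A -> C) (g : B -> C) (x : T) : C :=
  match x with inl a => f a | inr b => g (proj1_sig b) end.

Lemma copair_iB {C : Type} (f : A -> C) (g : B -> C) :
  f y = g rB -> forall b, copair f g (iB b) = g b.
Proof.
  intros Efg b. destruct (classic (b = rB)) as [->|Hb].
  - rewrite iB_root. exact Efg.
  - change b with (proj1_sig (exist (fun b => b <> rB) b Hb)).
    rewrite iB_nonroot. reflexivity.
Qed.

(* Monotonicity is checked on the normal form: a relation over a of A maps to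
   f(wa) ≤ f(a) with the B-pieces substituted, which holds by transitivity
   in C since g maps bw ≤ rB to g(bw) ≤ g(rB) = f(y). *)
Lemma copair_monotone (C : Type) (leC : list C -> C -> Prop) (f : A -> C) (g : B -> C) :
  is_bposet comm leC -> monotone leA leC f -> monotone leB leC g -> f y = g rB ->
  monotone le leC (copair f g).
Proof.
  intros BC Mf Mg Efg. pose proof BC as (_ & RC & TC & _).
  assert (Mg' : forall w b, leB w b -> leC (map (copair f g) (map iB w)) (g b)).
  { intros w b H. rewrite map_map. erewrite map_ext; [apply Mg; eauto|].
    intros; apply copair_iB; auto. }
  intros w x H.
  apply graft_le_nf in H as [(a & wa & ps & -> & H1 & H2 & H3)|(b & v & -> & H1 & H2)].
  - eapply bposet_weq; [exact BC| |apply weq_map, weq_sym; eauto].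
    rewrite concat_map. apply (TC _ _ _ (Mf _ _ H1)).
    apply Forall2_map_l, Forall2_map_r. eapply Forall2_impl; [|eauto].
    intros p a' [->|[-> (bw & Hb & ->)]]; simpl; [apply RC|].
    rewrite Efg. auto.
  - rewrite copair_iB; auto.
    eapply bposet_weq; [exact BC| |apply weq_map, weq_sym; eauto]. auto.
Qed.

Lemma graft_maps_ext {C : Type} (h h' : T -> C) :
  (forall a, h (iA a) = h' (iA a)) -> (forall b, h (iB b) = h' (iB b)) ->
  forall x, h x = h' x.
Proof. intros EA EB x. destruct (graft_cases x) as [[b ->]|[a [-> _]]]; auto. Qed.

End Grafting.

Theorem corollary5p1 (comm : bool) (A B : Type)
  (leA : list A -> A -> Prop) (leB : list B -> B -> Prop) (y : A) (rB : B) :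
  is_dos comm leA -> is_dos comm leB ->
  is_leaf leA y -> is_root leB rB ->
  (* A ∘ B is a dendroidally ordered set *)
  is_dos comm (graft_le comm leA leB y rB) /\
  (* the cocone A -> A ∘ B <- B over A <- ⋆ -> B *)
  monotone leA (graft_le comm leA leB y rB) (graft_inA rB) /\
  monotone leB (graft_le comm leA leB y rB) (graft_inB y rB) /\
  graft_inA rB y = graft_inB y rB rB /\
  (* universal property in Ω *)
  (forall (C : Type) (leC : list C -> C -> Prop), is_dos comm leC ->
   forall (f : A -> C) (g : B -> C),
     monotone leA leC f -> monotone leB leC g -> f y = g rB ->
     exists h : graft_T A B rB -> C,
       monotone (graft_le comm leA leB y rB) leC h /\
       (forall a, h (graft_inA rB a) = f a) /\
       (forall b, h (graft_inB y rB b) = g b) /\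
       (forall h' : graft_T A B rB -> C,
          monotone (graft_le comm leA leB y rB) leC h' ->
          (forall a, h' (graft_inA rB a) = f a) ->
          (forall b, h' (graft_inB y rB b) = g b) ->
          forall x, h' x = h x)).
Proof.
  intros HA HB Hy Hr.
  split; [exact (graft_dos comm A B leA leB y rB HA HB Hy Hr)|].
  split; [apply iA_monotone|split; [apply iB_monotone|split]].
  - symmetry; apply iB_root.
  - intros C leC [BC _] f g Mf Mg Efg.
    exists (copair A B rB f g). split; [apply copair_monotone; auto|].
    split; [reflexivity|split; [apply copair_iB; auto|]].
    intros h' _ E1 E2. apply (graft_maps_ext A B y rB); intros.
    + rewrite E1. reflexivity.
    + rewrite E2, copair_iB; auto.
Qed.
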